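(* If $\{P^{a,n}\}_{(a,n)\in\mathcal I\times\mathbb Z}$ and $\{Q^{a,n}\}_{(a,n)\in\mathcal I\times\mathbb Z}$ are collections of polynomials in $\mathcal O$ with widening gap, then the collection $\Big\{\sum_{(b,m)\in\mathcal I\times\mathbb Z}P^{b,m}\,\frac{\partial Q^{a,n}}{\partial X^{b,m}}\Big\}_{(a,n)\in\mathcal I\times\mathbb Z}$ has widening gap (and hence, given a further collection $\{R^{a,n}\}$ with widening gap, so does $\big\{\sum_{(b,m),(c,p)}P^{b,m}\frac{\partial Q^{c,p}}{\partial X^{b,m}}\frac{\partial R^{a,n}}{\partial X^{c,p}}\big\}_{(a,n)}$, and so on).
   Context: $\mathcal I$ is a finite index set and $\mathcal O=\mathbb C[X^{a,n}]_{(a,n)\in\mathcal I\times\mathbb Z}$. A collection $\{P^{a,n}\}_{(a,n)\in\mathcal I\times\mathbb Z}$ of polynomials in $\mathcal O$ has widening gap if, for every $K\ge1$, $P^{a,n}\in\mathbb C[X^{b,m}:|m|<|n|-K,\ b\in\mathcal I]$ for all $a\in\mathcal I$, for all but finitely many $n\in\mathbb Z$. (Each sum over $(b,m)$ above has only finitely many nonzero terms since $Q^{a,n}$ is a polynomial.) *)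

(* polynomials in the infinitely many variables X^{a,n},
   (a,n) in I * Z, over the complex numbers C = R[i] (R : realType),
   realised as the monoid algebra {malg C[{cmonom I * int}]} of multinomials. *)
From HB Require Import structures.
From mathcomp Require Import all_boot all_order all_algebra.
From mathcomp Require Import finmap.
From mathcomp Require Import reals.
From mathcomp.real_closed Require Import complex.
From mathcomp.multinomials Require Import monalg.

Set Implicit Arguments.
Unset Strict Implicit.
Unset Printing Implicit Defensive.

Import Order.TTheory GRing.Theory Num.Theory.
Local Open Scope ring_scope.
Local Open Scope fset_scope.

Definition var (I : finType) := (I * int)%type.
Definition Opoly (R : realType) (I : finType) :=
  {malg (complex R)[cmonom (var I)]}.

Definition pvars (R : realType) (I : finType) (P : Opoly R I) : {fset var I} :=
  \bigcup_(k <- msupp P) finsupp (cmonom_val k).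

Definition in_subring (R : realType) (I : finType) (S : pred (var I))
    (P : Opoly R I) : Prop :=
  forall k, k \in msupp P -> forall v : var I, (cmonom_val k v != 0)%N -> S v.

Definition pderiv (R : realType) (I : finType) (x : var I) (P : Opoly R I)
    : Opoly R I :=
  \sum_(k <- msupp P)
     << (P@_k *+ cmonom_val k x) *g [cmonom (cmonom_val k i - (i == x))%N | i in finsupp (cmonom_val k)]%M >>.

Definition widening_gap (R : realType) (I : finType)
    (P : I -> int -> Opoly R I) : Prop :=
  forall K : nat, (1 <= K)%N ->
    exists exc : seq int, forall n : int, n \notin exc ->
      forall a : I,
        in_subring (fun v : var I => `|v.2| < `|n| - K%:Z) (P a n).

(* The collection sum_{(b,m)} P^{b,m} dQ^{a,n}/dX^{b,m}; only finitely many
   terms are nonzero, namely those (b,m) occurring in Q^{a,n}. *)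
Definition derive_action (R : realType) (I : finType)
    (P Q : I -> int -> Opoly R I) : I -> int -> Opoly R I :=
  fun a n => \sum_(v <- pvars (Q a n)) P v.1 v.2 * pderiv v (Q a n).

From HB Require Import structures.
From mathcomp Require Import all_boot all_order all_algebra finmap zify.
From mathcomp Require Import reals.
From mathcomp.real_closed Require Import complex.
From mathcomp.multinomials Require Import monalg.

Set Implicit Arguments.
Unset Strict Implicit.
Unset Printing Implicit Defensive.

Import Order.TTheory GRing.Theory Num.Theory.
Local Open Scope ring_scope.

(* Fix K and the exceptional sets of P and Q for K. If n is not exceptional
   for Q, every variable X^{b,m} of Q^{a,n}, hence of its partial derivatives,
   has |m| < |n| - K. For non-exceptional m the variables X^{c,p} of P^{b,m}
   satisfy |p| < |m| - K < |n| - K; the finitely many exceptional m give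
   polynomials whose variables are all bounded by one constant B, and
   B < |n| - K as soon as |n| > B + K, which excludes only finitely many n. *)

Section InSubring.
Variables (R : realType) (I : finType).
Implicit Types (p q : Opoly R I) (S T : pred (var I)).

Lemma in_subringP S p : in_subring S p <-> {in pvars p, forall v, S v}.
Proof.
split=> [hp v /bigfcupP [k /andP[kp _]]|hp k kp v].
  by rewrite -cmE_neq0; apply: hp.
by rewrite cmE_neq0 => vk; apply: hp; apply/bigfcupP; exists k; rewrite ?kp.
Qed.

Lemma in_subring_sub S T p :
  in_subring S p -> (forall v, S v -> T v) -> in_subring T p.
Proof. by move=> hp ST k kp v kv; apply/ST/(hp k kp). Qed.

Lemma in_subring0 S : in_subring S (0 : Opoly R I).
Proof. by move=> k; rewrite msupp0 in_fset0. Qed.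

Lemma in_subringD S p q :
  in_subring S p -> in_subring S q -> in_subring S (p + q).
Proof.
move=> hp hq k /(fsubsetP (msuppD_le _ _)).
by rewrite in_fsetU => /orP[/hp | /hq].
Qed.

Lemma in_subringM S p q :
  in_subring S p -> in_subring S q -> in_subring S (p * q).
Proof.
move=> hp hq k /msuppM_le [k1 [k2 [k1p k2q ->]]] v.
by rewrite cmM addn_eq0 negb_and => /orP[/(hp k1 k1p) | /(hq k2 k2q)].
Qed.

Lemma in_subring_sum S (J : eqType) (s : seq J) (F : J -> Opoly R I) :
  (forall j, j \in s -> in_subring S (F j)) -> in_subring S (\sum_(j <- s) F j).
Proof.
elim: s => [|j s IHs] hF; first by rewrite big_nil; apply: in_subring0.
rewrite big_cons; apply: in_subringD; first by apply: hF; rewrite mem_head.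
by apply: IHs => i si; apply: hF; rewrite inE si orbT.
Qed.

Lemma in_subring_pderiv S x p : in_subring S p -> in_subring S (pderiv x p).
Proof.
move=> hp; apply: in_subring_sum => k kp k' /(fsubsetP msuppU_le).
rewrite in_fset1 => /eqP -> v; rewrite cmE fsfun_fun /=.
by case: ifP => // vk _; apply: (hp k kp); rewrite cmE_neq0.
Qed.

Lemma in_subring_derive_action S (P Q : I -> int -> Opoly R I) a n :
  in_subring S (Q a n) -> (forall v, S v -> in_subring S (P v.1 v.2)) ->
  in_subring S (derive_action P Q a n).
Proof.
move=> hQ hP; apply: in_subring_sum => v vQ.
apply: in_subringM; last exact: in_subring_pderiv.
exact/hP/((in_subringP S (Q a n)).1 hQ).
Qed.

Definition var_bound p : nat := \max_(v <- pvars p) `|v.2|%N.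

Lemma in_subring_var_bound p :
  in_subring (fun v : var I => `|v.2| <= (var_bound p)%:Z) p.
Proof.
apply/in_subringP => v vp /=; rewrite -abszE lez_nat.
exact: (leq_bigmax_seq (F := fun v : var I => `|v.2|%N) _ vp).
Qed.

Lemma finite_family_bounded (F : I -> int -> Opoly R I) (s : seq int) :
  exists B : nat, forall b m, m \in s ->
    in_subring (fun v : var I => `|v.2| <= B%:Z) (F b m).
Proof.
exists (\max_(b : I) \max_(m <- s) var_bound (F b m))%N => b m ms.
apply: (in_subring_sub (in_subring_var_bound (p := F b m))).
move=> v /= /le_trans; apply.
rewrite lez_nat; apply: leq_trans (leq_bigmax b).
exact: (leq_bigmax_seq (F := fun m => var_bound (F b m)) _ ms).
Qed.

End InSubring.

Lemma abs_gt_cofinite (B : nat) :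
  exists s : seq int, forall n : int, n \notin s -> B%:Z < `|n|.
Proof.
exists (map Posz (iota 0 B.+1) ++ map Negz (iota 0 B)) => n.
apply: contraR; rewrite -leNgt mem_cat => nB.
by case: n nB => k nB; apply/orP; [left | right];
  apply: map_f; rewrite mem_iota; lia.
Qed.

Theorem corollary3p2 (R : realType) (I : finType)
    (P Q : I -> int -> Opoly R I) :
  widening_gap P -> widening_gap Q -> widening_gap (derive_action P Q).
Proof.
move=> hP hQ K K_ge1.
have [eP heP] := hP K K_ge1.
have [eQ heQ] := hQ K K_ge1.
have [B hB] := finite_family_bounded P eP.
have [eN heN] := abs_gt_cofinite (B + K).
exists (eQ ++ eN) => n; rewrite mem_cat negb_or => /andP[nQ /heN n_large] a.
apply: in_subring_derive_action (heQ n nQ a) _ => v /= v_small.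
have [vP | vnP] := boolP (v.2 \in eP).
  apply: (in_subring_sub (hB _ _ vP)) => w /= w_bounded.
  by clear -n_large w_bounded; lia.
apply: (in_subring_sub (heP _ vnP v.1)) => w /= w_small.
by clear -v_small w_small; lia.
Qed.
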